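(* There is an absolute constant $C>0$ such that for every $n\ge2$, all monotone non-decreasing subadditive valuations $v_1,\dots,v_n:[0,1]\to\mathbb R_{\ge0}$ and all budgets $B_1,\dots,B_n>0$, the final allocation $y$ of the Estimate-and-Price auction satisfies $\bar W(y)\ge\frac{1}{C\log^2 n}\bar W^*$.
   Context: Subadditive: $v_i(a+b)\le v_i(a)+v_i(b)$ whenever $a,b,a+b\in[0,1]$. One divisible good (the interval $[0,1]$), $n\ge2$ players. Let $\bar v_i(y)=\min\{v_i(y),B_i\}$ and $k=\lceil 8\log_2 n\rceil$. Liquid welfare: $\bar W(y)=\sum_i\min\{v_i(y_i),B_i\}$; $\bar W^*=\sup\{\bar W(y):y\in\mathbb R^n_{\ge0},\sum_iy_i=1\}$. Sell-Without-$r$ (for a player $r$): define $p:[0,\frac12]\to\mathbb R_{\ge0}$ by $p(t)=p_j=\frac{2^j}{8}\bar v_r(\frac12)$ for $t\in[\frac{j-1}{2k},\frac{j}{2k})$, $j=1,\dots,k$. The players other than $r$ are processed in a fixed arbitrary order; when player $i$'s turn comes, let $z_i$ be the total amount taken by earlier players; player $i$ takes $x_i\in[0,\frac12-z_i]$ maximizing $v_i(x_i)-\int_{z_i}^{z_i+x_i}p(t)\,dt$ subject to $\int_{z_i}^{z_i+x_i}p(t)\,dt\le B_i$, and pays $\pi_i=\int_{z_i}^{z_i+x_i}p(t)\,dt$. Estimate-and-Price: let $r_1=\arg\max_i\bar v_i(\frac12)$ and $r_2=\arg\max_{i\ne r_1}\bar v_i(\frac12)$ (fixed tie-breaking). Let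 $(x,\pi)$ be the outcome of Sell-Without-$r_1$ on players $[n]\setminus\{r_1\}$ and $(x',\pi')$ that of Sell-Without-$r_2$ on players $[n]\setminus\{r_2\}$. Each $i\ne r_1$ receives $x_i$ and pays $\pi_i$. Player $r_1$ receives $x'_{r_1}$ and pays $\pi'_{r_1}$ if $v_{r_1}(x'_{r_1})-\pi'_{r_1}\ge v_{r_1}(\frac12)-2\bar v_{r_2}(\frac12)$; otherwise he receives $\frac12$ and pays $2\bar v_{r_2}(\frac12)$. *)

From Stdlib Require Import Reals Lra Lia List.
Import ListNotations.
Open Scope R_scope.

(* Players are 0..n-1; valuation of player i is v i : R -> R (only values on
   [0,1] matter); budget of player i is B i. *)

Definition log2 (x : R) : R := ln x / ln 2.

(* ceiling of a real, as an integer: ceil x = - floor(-x), floor y = up y - 1 *)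
Definition ceilZ (x : R) : Z := (1 - up (- x))%Z.

Definition kk (n : nat) : nat := Z.to_nat (ceilZ (8 * log2 (INR n))).

Definition vbar (v : nat -> R -> R) (B : nat -> R) (i : nat) (y : R) : R :=
  Rmin (v i y) (B i).

Definition price_level (v : nat -> R -> R) (B : nat -> R) (r : nat) (j : nat) : R :=
  2 ^ j / 8 * vbar v B r (1/2).

(* The price function p(t) of Sell-Without-r: p(t) = p_j on [(j-1)/(2k), j/(2k)),
   j = 1..k (and 0 outside [0,1/2)). *)
Definition price_fun (v : nat -> R -> R) (B : nat -> R) (n r : nat) (t : R) : R :=
  let k := kk n in
  fold_right Rplus 0
    (map (fun j => if Rle_dec (INR (j - 1) / (2 * INR k)) t then
                     if Rlt_dec t (INR j / (2 * INR k)) then price_level v B r j else 0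
                   else 0)
         (seq 1 k)).

(* Cumulative price F(s) = \int_0^s p(t) dt, computed exactly for the step
   function p:  sum_j p_j * |[ (j-1)/(2k), j/(2k) ) \cap [0,s]|. *)
Definition cum_price (v : nat -> R -> R) (B : nat -> R) (n r : nat) (s : R) : R :=
  let k := kk n in
  fold_right Rplus 0
    (map (fun j => price_level v B r j *
                   Rmax 0 (Rmin s (INR j / (2 * INR k)) - INR (j - 1) / (2 * INR k)))
         (seq 1 k)).

Definition cost (v : nat -> R -> R) (B : nat -> R) (n r : nat) (z x : R) : R :=
  cum_price v B n r (z + x) - cum_price v B n r z.

Definition best_response (v : nat -> R -> R) (B : nat -> R) (n r i : nat) (z xi : R) : Prop :=
  0 <= xi <= 1/2 - z /\
  cost v B n r z xi <= B i /\
  (forall x', 0 <= x' <= 1/2 - z -> cost v B n r z x' <= B i ->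
     v i x' - cost v B n r z x' <= v i xi - cost v B n r z xi).

Fixpoint sell_run (v : nat -> R -> R) (B : nat -> R) (n r : nat)
    (x pi : nat -> R) (l : list nat) (z : R) : Prop :=
  match l with
  | [] => True
  | i :: l' =>
      best_response v B n r i z (x i) /\
      pi i = cost v B n r z (x i) /\
      sell_run v B n r x pi l' (z + x i)
  end.

(* (x, pi) is an outcome of Sell-Without-r on players [n] \ {r}, processed in the
   order given by the list ord (a permutation of 0..n-1, with r skipped). *)
Definition sell_without (v : nat -> R -> R) (B : nat -> R) (n : nat) (ord : list nat)
    (r : nat) (x pi : nat -> R) : Prop :=
  sell_run v B n r x pi (filter (fun i => negb (Nat.eqb i r)) ord) 0.

Definition ep_alloc (v : nat -> R -> R) (B : nat -> R) (r1 r2 : nat)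
    (x x' pi' : nat -> R) (i : nat) : R :=
  if Nat.eqb i r1 then
    (if Rle_dec (v r1 (1/2) - 2 * vbar v B r2 (1/2)) (v r1 (x' r1) - pi' r1)
     then x' r1 else 1/2)
  else x i.

Definition liquid_welfare (v : nat -> R -> R) (B : nat -> R) (n : nat) (y : nat -> R) : R :=
  fold_right Rplus 0 (map (fun i => vbar v B i (y i)) (seq 0 n)).

Definition feasible (n : nat) (y : nat -> R) : Prop :=
  (forall i, (i < n)%nat -> 0 <= y i) /\ fold_right Rplus 0 (map y (seq 0 n)) = 1.

(* the set of achievable liquid welfare values; \bar W^* is its supremum *)
Definition welfare_values (v : nat -> R -> R) (B : nat -> R) (n : nat) (w : R) : Prop :=
  exists y, feasible n y /\ w = liquid_welfare v B n y.

Definition valuation (f : R -> R) : Prop :=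
  (forall a, 0 <= a <= 1 -> 0 <= f a) /\
  (forall a b, 0 <= a -> a <= b -> b <= 1 -> f a <= f b) /\
  (forall a b, 0 <= a -> 0 <= b -> a + b <= 1 -> f (a + b) <= f a + f b).

From Stdlib Require Import Reals ZArith List Permutation Lra Lia.
Import ListNotations.
Open Scope R_scope.

(** Let [V = vbar_r1(1/2)] be the estimate, [k = ceil(8 log2 n)] the number of
    price levels, [D = 1/(2k)] the slot width, [Z] the amount sold and [Rev] the
    revenue of Sell-Without-[r1], and [A] the liquid welfare of the final
    allocation.  The proof compares everything with [k A]:
    - lower bound: [V <= 16 k A].  If the runner-up's estimate is below [V/4],
      [r1] keeps at least [V/2]; otherwise [r2], facing the first price
      [V/4], either arrives after half a slot is sold (revenue [>= V D / 8]) or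
      buys enough to be worth [V D / 8] himself;
    - upper bound: every feasible allocation is worth at most [64 k A].  If half
      a slot is left unsold, each buyer values any bundle at most [8k] times his
      purchase plus a linear price term (by subadditivity, chunking the bundle
      into half slots); if not, the top price [2^k V / 8 >= n V / 8] was paid.
    Since [k <= 9 log2(n)^2], the constant [C = 576] works. *)

Definition sumR (f : nat -> R) (l : list nat) : R := fold_right Rplus 0 (map f l).

Lemma sumR_cons f a l : sumR f (a :: l) = f a + sumR f l.
Proof. reflexivity. Qed.

Lemma sumR_app f l1 l2 : sumR f (l1 ++ l2) = sumR f l1 + sumR f l2.
Proof. induction l1 as [|a l1 IH]; simpl; [unfold sumR; simpl; ring|].
  rewrite !sumR_cons, IH; ring. Qed.

Lemma sumR_le f g l : (forall x, In x l -> f x <= g x) -> sumR f l <= sumR g l.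
Proof.
  induction l as [|a l IH]; intros H; [unfold sumR; simpl; lra|].
  rewrite !sumR_cons. apply Rplus_le_compat; [apply H; left; auto|].
  apply IH; intros; apply H; right; auto.
Qed.

Lemma sumR_ext f g l : (forall x, In x l -> f x = g x) -> sumR f l = sumR g l.
Proof. intros H. apply Rle_antisym; apply sumR_le; intros x Hx; rewrite (H x Hx); lra. Qed.

Lemma sumR_plus f g l : sumR (fun x => f x + g x) l = sumR f l + sumR g l.
Proof. induction l as [|a l IH]; [unfold sumR; simpl; ring|]. rewrite !sumR_cons, IH; ring. Qed.

Lemma sumR_minus f g l : sumR (fun x => f x - g x) l = sumR f l - sumR g l.
Proof. induction l as [|a l IH]; [unfold sumR; simpl; ring|]. rewrite !sumR_cons, IH; ring. Qed.

Lemma sumR_scal c f l : sumR (fun x => c * f x) l = c * sumR f l.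
Proof. induction l as [|a l IH]; [unfold sumR; simpl; ring|]. rewrite !sumR_cons, IH; ring. Qed.

Lemma sumR_const c l : sumR (fun _ => c) l = INR (length l) * c.
Proof.
  induction l as [|a l IH]; [unfold sumR; simpl; ring|].
  rewrite sumR_cons, IH, length_cons, S_INR. ring.
Qed.

Lemma sumR_nonneg f l : (forall x, In x l -> 0 <= f x) -> 0 <= sumR f l.
Proof.
  intros H. apply Rle_trans with (sumR (fun _ => 0) l).
  - rewrite sumR_const. lra.
  - apply sumR_le; auto.
Qed.

Lemma sumR_term f l a : (forall x, In x l -> 0 <= f x) -> In a l -> f a <= sumR f l.
Proof.
  induction l as [|b l IH]; intros H Ha; [destruct Ha|]. rewrite sumR_cons.
  assert (Hl : 0 <= sumR f l) by (apply sumR_nonneg; intros; apply H; right; auto).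
  destruct Ha as [<-|Ha]; [lra|].
  assert (0 <= f b) by (apply H; left; auto).
  assert (f a <= sumR f l) by (apply IH; auto; intros; apply H; right; auto). lra.
Qed.

Lemma sumR_perm f l1 l2 : Permutation l1 l2 -> sumR f l1 = sumR f l2.
Proof. induction 1; rewrite ?sumR_cons; lra. Qed.

Lemma sumR_remove f l r : NoDup l -> In r l ->
  sumR f l = f r + sumR f (filter (fun i => negb (Nat.eqb i r)) l).
Proof.
  induction l as [|a l IH]; intros Hnd Hin; [destruct Hin|].
  apply NoDup_cons_iff in Hnd as [Hna Hnd]. simpl.
  destruct (Nat.eqb_spec a r) as [->|Hne]; simpl.
  - rewrite (filter_ext_in _ (fun _ => true)), filter_true; [reflexivity|].
    intros a Ha. destruct (Nat.eqb_spec a r); [subst; contradiction|reflexivity].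
  - destruct Hin as [->|Hin]; [congruence|]. rewrite !sumR_cons, IH; auto. ring.
Qed.

(** Level [j] (for [j = 1..m]) charges
    [pr j] per unit on the slot [[(j-1) d, j d)]; [overlap d j s] is the length
    of that slot bought when the amount [[0, s]] is sold, and [step_cum d m pr s]
    the total price of [[0, s]], i.e. the integral of the step function. *)

Definition overlap (d : R) (j : nat) (s : R) : R :=
  Rmax 0 (Rmin s (INR j * d) - INR (j - 1) * d).

Definition step_cum (d : R) (m : nat) (pr : nat -> R) (s : R) : R :=
  sumR (fun j => pr j * overlap d j s) (seq 1 m).

Lemma cum_price_step v B n r s :
  cum_price v B n r s = step_cum (/ (2 * INR (kk n))) (kk n) (price_level v B r) s.
Proof. reflexivity. Qed.

Section StepPrices.
Variables (d : R) (m : nat) (pr : nat -> R).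
Hypothesis d_pos : 0 < d.
Hypothesis pr_nonneg : forall j, 0 <= pr j.

Lemma overlap_S j s : overlap d (S j) s = Rmax 0 (Rmin s (INR j * d + d) - INR j * d).
Proof.
  unfold overlap. rewrite S_INR. replace (S j - 1)%nat with j by lia.
  do 3 f_equal. ring.
Qed.

Lemma overlap_nonneg j s : 0 <= overlap d j s.
Proof. apply Rmax_l. Qed.

Lemma overlap_mono j s z : s <= z -> overlap d j s <= overlap d j z.
Proof.
  intros H. destruct j as [|j].
  - unfold overlap. simpl. unfold Rmax, Rmin; repeat destruct Rle_dec; lra.
  - rewrite !overlap_S. unfold Rmax, Rmin; repeat destruct Rle_dec; lra.
Qed.

Lemma overlap_before j s : (1 <= j)%nat -> s <= INR (j - 1) * d -> overlap d j s = 0.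
Proof.
  intros Hj H. destruct j as [|j]; [lia|]. rewrite overlap_S.
  replace (S j - 1)%nat with j in H by lia.
  unfold Rmax, Rmin; repeat destruct Rle_dec; lra.
Qed.

Lemma overlap_half j s : (1 <= j)%nat -> INR j * d - d / 2 <= s -> d / 2 <= overlap d j s.
Proof.
  intros Hj H. destruct j as [|j]; [lia|]. rewrite overlap_S. rewrite S_INR in H.
  unfold Rmax, Rmin; repeat destruct Rle_dec; nra.
Qed.

Lemma overlap_sum s : 0 <= s -> sumR (fun j => overlap d j s) (seq 1 m) = Rmin s (INR m * d).
Proof.
  intros Hs. induction m as [|k IH].
  - unfold sumR; simpl. rewrite Rmult_0_l. unfold Rmin; destruct Rle_dec; lra.
  - rewrite seq_S, sumR_app, IH. replace (1 + k)%nat with (S k) by lia.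
    replace (sumR (fun j => overlap d j s) [S k]) with (overlap d (S k) s)
      by (unfold sumR; simpl; ring).
    rewrite overlap_S, S_INR.
    assert (0 <= INR k * d) by (apply Rmult_le_pos; [apply pos_INR|lra]).
    unfold Rmax, Rmin; repeat destruct Rle_dec; nra.
Qed.

Lemma step_cum_mono z s : z <= s -> step_cum d m pr z <= step_cum d m pr s.
Proof.
  intros H. apply sumR_le. intros j _.
  apply Rmult_le_compat_l; auto. apply overlap_mono; auto.
Qed.

Lemma step_cum_nonneg s : 0 <= step_cum d m pr s.
Proof. apply sumR_nonneg. intros j _. apply Rmult_le_pos; auto. apply overlap_nonneg. Qed.

Lemma step_cum_0 : step_cum d m pr 0 = 0.
Proof.
  unfold step_cum. rewrite (sumR_ext _ (fun _ => 0)); [rewrite sumR_const; ring|].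
  intros j Hj. apply in_seq in Hj. rewrite overlap_before; [ring|lia|].
  apply Rmult_le_pos; [apply pos_INR|lra].
Qed.

Lemma step_cum_level j s : (1 <= j <= m)%nat -> INR j * d - d / 2 <= s ->
  pr j * (d / 2) <= step_cum d m pr s.
Proof.
  intros Hj Hs. apply Rle_trans with (pr j * overlap d j s).
  - apply Rmult_le_compat_l; auto. apply overlap_half; [lia|auto].
  - apply (sumR_term (fun j => pr j * overlap d j s)); [|apply in_seq; lia].
    intros i _. apply Rmult_le_pos; auto. apply overlap_nonneg.
Qed.

Lemma step_cum_increment z a P : 0 <= z -> 0 <= a -> 0 <= P ->
  (forall j, (1 <= j <= m)%nat -> INR (j - 1) * d < z + a -> pr j <= P) ->
  step_cum d m pr (z + a) - step_cum d m pr z <= P * a.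
Proof.
  intros Hz Ha HP Hj. unfold step_cum. rewrite <- sumR_minus.
  apply Rle_trans with (sumR (fun j => P * (overlap d j (z + a) - overlap d j z)) (seq 1 m)).
  - apply sumR_le. intros j Hin. apply in_seq in Hin.
    assert (overlap d j z <= overlap d j (z + a)) by (apply overlap_mono; lra).
    destruct (Rlt_dec (INR (j - 1) * d) (z + a)) as [Hlt|Hge].
    + pose proof (Hj j ltac:(lia) Hlt). rewrite <- Rmult_minus_distr_l.
      apply Rmult_le_compat_r; lra.
    + rewrite !(overlap_before j); lia || lra.
  - rewrite sumR_scal, sumR_minus, !overlap_sum by lra.
    apply Rmult_le_compat_l; auto. unfold Rmin; repeat destruct Rle_dec; lra.
Qed.

End StepPrices.

Lemma valuation_vbar v B i : valuation (v i) -> 0 <= B i -> valuation (vbar v B i).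
Proof.
  intros [Hp [Hm Hs]] HB. unfold vbar. split; [|split].
  - intros a Ha. pose proof (Hp a Ha). unfold Rmin; destruct Rle_dec; lra.
  - intros a b Ha Hab Hb. pose proof (Hm a b Ha Hab Hb). unfold Rmin; repeat destruct Rle_dec; lra.
  - intros a b Ha Hb Hab. pose proof (Hs a b Ha Hb Hab).
    pose proof (Hp a ltac:(lra)). pose proof (Hp b ltac:(lra)).
    unfold Rmin; repeat destruct Rle_dec; lra.
Qed.

Lemma valuation_chunks f : valuation f -> forall N s, 0 <= s -> INR (S N) * s <= 1 ->
  f (INR (S N) * s) <= INR (S N) * f s.
Proof.
  intros [Hp [Hm Hs]]. induction N as [|N IH]; intros s Hs0 H.
  - simpl. rewrite !Rmult_1_l. lra.
  - rewrite (S_INR (S N)) in *. pose proof (pos_INR (S N)).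
    assert (0 <= INR (S N) * s) by (apply Rmult_le_pos; lra).
    replace ((INR (S N) + 1) * s) with (INR (S N) * s + s) by ring.
    pose proof (Hs (INR (S N) * s) s ltac:(lra) Hs0 ltac:(lra)).
    pose proof (IH s Hs0 ltac:(nra)). lra.
Qed.

Lemma valuation_le_twice_half f y : valuation f -> 0 <= y <= 1 -> f y <= 2 * f (1/2).
Proof.
  intros [Hp [Hm Hs]] Hy. pose proof (Hp (1/2) ltac:(lra)).
  destruct (Rle_dec y (1/2)).
  - pose proof (Hm y (1/2) ltac:(lra) r ltac:(lra)). pose proof (Hp y Hy). lra.
  - replace y with (1/2 + (y - 1/2)) by ring.
    pose proof (Hs (1/2) (y - 1/2) ltac:(lra) ltac:(lra) ltac:(lra)).
    pose proof (Hm (y - 1/2) (1/2) ltac:(lra) ltac:(lra) ltac:(lra)). lra.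
Qed.

Lemma chunk_count y t : 0 <= y <= 1 -> 0 < t <= 1 ->
  exists N, INR (S N) <= 2 / t /\ y <= INR (S N) * t.
Proof.
  intros Hy Ht. assert (H1t : 1 <= 1 / t) by (apply Rmult_le_reg_r with t; field_simplify; lra).
  destruct (Rle_dec y t).
  - exists 0%nat. simpl. unfold Rdiv in *. lra.
  - destruct (archimed (y / t)) as [H1 H2].
    assert (Hyt : y / t <= 1 / t) by (unfold Rdiv; apply Rmult_le_compat_r; [apply Rlt_le, Rinv_0_lt_compat|]; lra).
    assert (Hup : (0 < up (y / t))%Z).
    { apply lt_IZR. apply Rle_lt_trans with (y / t); [|lra]. unfold Rdiv. apply Rmult_le_pos; [lra|].
      apply Rlt_le, Rinv_0_lt_compat; lra. }
    exists (Z.to_nat (up (y / t)) - 1)%nat.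
    replace (INR (S (Z.to_nat (up (y / t)) - 1))) with (IZR (up (y / t))).
    2:{ replace (S (Z.to_nat (up (y / t)) - 1)) with (Z.to_nat (up (y / t))) by lia.
        rewrite INR_IZR_INZ, Z2Nat.id; auto; lia. }
    split; [unfold Rdiv in *; lra|].
    replace y with (y / t * t) at 1 by (field; lra). apply Rmult_le_compat_r; lra.
Qed.

Lemma valuation_envelope f t c P : valuation f -> 0 < t <= 1 -> 0 <= c ->
  (forall a, 0 <= a <= t -> f a <= c + P * a) ->
  forall y, 0 <= y <= 1 -> f y <= 2 / t * c + P * y.
Proof.
  intros Hf Ht Hc Hsmall y Hy.
  destruct (chunk_count y t Hy Ht) as [N [HN Hcover]].
  pose proof (valuation_chunks f Hf N) as Hch.
  rewrite S_INR in *. pose proof (pos_INR N) as HN0.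
  set (s := y / (INR N + 1)).
  assert (Hys : (INR N + 1) * s = y) by (unfold s; field; lra).
  assert (Hs0 : 0 <= s) by (unfold s; apply Rmult_le_pos; [lra|apply Rlt_le, Rinv_0_lt_compat; lra]).
  assert (Hst : s <= t) by nra.
  specialize (Hch s Hs0 ltac:(lra)). rewrite Hys in Hch.
  pose proof (Hsmall s (conj Hs0 Hst)) as Hfs.
  apply Rle_trans with ((INR N + 1) * (c + P * s)); [nra|].
  rewrite Rmult_plus_distr_l, <- Rmult_assoc, (Rmult_comm _ P), Rmult_assoc, Hys.
  apply Rplus_le_compat_r, Rmult_le_compat_r; lra.
Qed.

Lemma price_level_nonneg v B r j : 0 <= vbar v B r (1/2) -> 0 <= price_level v B r j.
Proof.
  intros H. unfold price_level. apply Rmult_le_pos; auto.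
  unfold Rdiv. apply Rmult_le_pos; [apply pow_le|]; lra.
Qed.

Lemma price_level_1 v B r : price_level v B r 1 = vbar v B r (1/2) / 4.
Proof. unfold price_level. simpl. field. Qed.

Lemma price_level_S v B r j : price_level v B r (S j) = 2 * price_level v B r j.
Proof. unfold price_level. simpl. field. Qed.

Lemma log2_ge_1 n : (2 <= n)%nat -> 1 <= log2 (INR n).
Proof.
  intros Hn. pose proof ln_lt_2.
  assert (Hn2 : 2 <= INR n) by (apply (le_INR 2) in Hn; simpl in Hn; lra).
  assert (ln 2 <= ln (INR n)).
  { destruct (Req_dec (INR n) 2) as [->|Hne]; [lra|]. left; apply ln_increasing; lra. }
  unfold log2. apply Rmult_le_reg_r with (ln 2); [lra|]. field_simplify; lra.
Qed.

Lemma kk_bounds n : (2 <= n)%nat ->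
  8 * log2 (INR n) <= INR (kk n) < 8 * log2 (INR n) + 1.
Proof.
  intros Hn. pose proof (log2_ge_1 n Hn). unfold kk, ceilZ.
  destruct (archimed (- (8 * log2 (INR n)))) as [H1 H2].
  assert (Hc : (0 <= 1 - up (- (8 * log2 (INR n))))%Z) by (apply le_IZR; rewrite minus_IZR; simpl; lra).
  rewrite (INR_IZR_INZ (Z.to_nat _)), Z2Nat.id by exact Hc. rewrite minus_IZR. simpl. lra.
Qed.

(* [2^k >= n], so the top price [2^k vbar_r(1/2)/8] is at least [n/8] times
   the estimate. *)
Lemma n_le_pow_kk n : (2 <= n)%nat -> INR n <= 2 ^ kk n.
Proof.
  intros Hn. pose proof (log2_ge_1 n Hn). pose proof (kk_bounds n Hn). pose proof ln_lt_2.
  assert (Hn2 : 2 <= INR n) by (apply (le_INR 2) in Hn; simpl in Hn; lra).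
  destruct (Rle_dec (INR n) (2 ^ kk n)) as [Hle|Hgt]; auto. exfalso.
  apply Rnot_le_lt, ln_increasing in Hgt; [|apply pow_lt; lra].
  rewrite ln_pow in Hgt by lra.
  assert (ln (INR n) = log2 (INR n) * ln 2) by (unfold log2; field; lra).
  nra.
Qed.

Section SellRun.
Variables (v : nat -> R -> R) (B : nat -> R) (n r : nat) (x pi : nat -> R).

Lemma run_sold_range l z : sell_run v B n r x pi l z -> z <= 1/2 ->
  z <= z + sumR x l <= 1/2.
Proof.
  revert z. induction l as [|a l IH]; intros z H Hz; [unfold sumR; simpl; lra|].
  destruct H as [[Hx _] [_ H]]. rewrite sumR_cons.
  pose proof (IH _ H ltac:(lra)). lra.
Qed.

Lemma run_member l z i : sell_run v B n r x pi l z -> 0 <= z <= 1/2 -> In i l ->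
  exists zi, z <= zi <= z + sumR x l /\
    best_response v B n r i zi (x i) /\ pi i = cost v B n r zi (x i).
Proof.
  revert z. induction l as [|a l IH]; intros z H Hz Hi; [destruct Hi|].
  destruct H as [Hbr [Hpi H]]. pose proof Hbr as [Hx _]. rewrite sumR_cons.
  pose proof (run_sold_range l (z + x a) H ltac:(lra)).
  destruct Hi as [<-|Hi].
  - exists z. split; [lra|split; auto].
  - destruct (IH (z + x a) H ltac:(lra) Hi) as [zi [Hzi Hrest]]. exists zi. split; [lra|auto].
Qed.

Lemma run_revenue l z : sell_run v B n r x pi l z ->
  sumR pi l = cum_price v B n r (z + sumR x l) - cum_price v B n r z.
Proof.
  revert z. induction l as [|a l IH]; intros z H; [unfold sumR; simpl; rewrite Rplus_0_r; ring|].
  destruct H as [_ [Hpi H]]. rewrite !sumR_cons, (IH _ H), Hpi. unfold cost.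
  rewrite Rplus_assoc. ring.
Qed.

Lemma best_response_guarantee i zi xi : best_response v B n r i zi xi -> valuation (v i) ->
  (forall a, 0 <= a -> 0 <= cost v B n r zi a) ->
  cost v B n r zi xi <= vbar v B i xi /\
  forall a, 0 <= a <= 1/2 - zi -> vbar v B i a <= vbar v B i xi + cost v B n r zi a.
Proof.
  intros [Hx [Hb Hu]] [Hv0 _] Hc.
  assert (Hc0 : cost v B n r zi 0 = 0) by (unfold cost; rewrite Rplus_0_r; ring).
  pose proof (Hc xi ltac:(lra)). pose proof (Hv0 0 ltac:(lra)).
  pose proof (Hu 0 ltac:(lra) ltac:(rewrite Hc0; lra)) as Hnobuy. rewrite Hc0 in Hnobuy.
  unfold vbar. split.
  - unfold Rmin; destruct Rle_dec; lra.
  - intros a Ha. pose proof (Hc a ltac:(lra)).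
    destruct (Rle_dec (cost v B n r zi a) (B i)) as [Hle|Hgt].
    + pose proof (Hu a Ha Hle). unfold Rmin; repeat destruct Rle_dec; lra.
    + unfold Rmin; repeat destruct Rle_dec; lra.
Qed.

Lemma cost_nonneg z a : (1 <= kk n)%nat -> 0 <= vbar v B r (1/2) -> 0 <= a ->
  0 <= cost v B n r z a.
Proof.
  intros Hk HV Ha. unfold cost. rewrite !cum_price_step.
  assert (Hd : 0 < / (2 * INR (kk n))) by (apply Rinv_0_lt_compat; apply (le_INR 1) in Hk; simpl in Hk; lra).
  pose proof (step_cum_mono _ (kk n) (price_level v B r) Hd
    (fun j => price_level_nonneg v B r j HV) z (z + a) ltac:(lra)). lra.
Qed.

End SellRun.

(** The analysis of Estimate-and-Price on a fixed instance. *)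

Section EstimateAndPrice.
Variables (n : nat) (v : nat -> R -> R) (B : nat -> R).
Hypothesis n_ge_2 : (2 <= n)%nat.
Hypothesis v_val : forall i, (i < n)%nat -> valuation (v i).
Hypothesis B_pos : forall i, (i < n)%nat -> 0 < B i.
Variables (ord : list nat) (r1 r2 : nat) (x pi x' pi' : nat -> R).
Hypothesis ord_perm : Permutation ord (seq 0 n).
Hypothesis r1_lt : (r1 < n)%nat.
Hypothesis r1_max : forall i, (i < n)%nat -> vbar v B i (1/2) <= vbar v B r1 (1/2).
Hypothesis r2_lt : (r2 < n)%nat.
Hypothesis r2_ne : r2 <> r1.
Hypothesis run1 : sell_without v B n ord r1 x pi.
Hypothesis run2 : sell_without v B n ord r2 x' pi'.

Let others (r : nat) : list nat := filter (fun i => negb (Nat.eqb i r)) ord.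

Lemma in_others r i : In i (others r) <-> (i < n)%nat /\ i <> r.
Proof.
  unfold others. rewrite filter_In, Bool.negb_true_iff, Nat.eqb_neq.
  split; intros [Hi Hr]; split; auto.
  - apply (Permutation_in _ ord_perm), in_seq in Hi. lia.
  - apply (Permutation_in _ (Permutation_sym ord_perm)), in_seq. lia.
Qed.

Lemma sum_players f r : (r < n)%nat -> sumR f (seq 0 n) = f r + sumR f (others r).
Proof.
  intros Hr. rewrite (sumR_perm f _ _ (Permutation_sym ord_perm)).
  apply sumR_remove.
  - exact (Permutation_NoDup (Permutation_sym ord_perm) (seq_NoDup n 0)).
  - apply (Permutation_in _ (Permutation_sym ord_perm)), in_seq. lia.
Qed.

Let k : nat := kk n.
Let D : R := / (2 * INR k).

Lemma slots_facts : (1 <= k)%nat /\ 2 * INR k * D = 1 /\ 0 < D /\ D <= 1/2.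
Proof.
  pose proof (log2_ge_1 n n_ge_2). pose proof (kk_bounds n n_ge_2).
  assert (Hk : 1 <= INR k) by (unfold k; lra).
  assert (HD : 2 * INR k * D = 1) by (unfold D; field; lra).
  assert (0 < D) by (unfold D; apply Rinv_0_lt_compat; lra).
  split; [apply INR_le; simpl; lra|]. split; [auto|]. split; nra.
Qed.

Lemma vbar_nonneg i a : (i < n)%nat -> 0 <= a <= 1 -> 0 <= vbar v B i a.
Proof.
  intros Hi Ha. apply (valuation_vbar v B i (v_val i Hi) (Rlt_le _ _ (B_pos i Hi))). exact Ha.
Qed.

Lemma buyer_facts r x0 pi0 : sell_without v B n ord r x0 pi0 -> (r < n)%nat ->
  forall i, (i < n)%nat -> i <> r -> exists zi,
    0 <= zi <= sumR x0 (others r) /\ 0 <= x0 i <= 1/2 /\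
    0 <= pi0 i <= vbar v B i (x0 i) /\
    forall a, 0 <= a <= 1/2 - zi -> vbar v B i a <= vbar v B i (x0 i) + cost v B n r zi a.
Proof.
  intros Hrun Hr i Hi Hir.
  destruct (run_member v B n r x0 pi0 (others r) 0 i Hrun ltac:(lra)
    (proj2 (in_others r i) (conj Hi Hir))) as [zi [Hzi [Hbr Hpay]]].
  assert (Hc : forall a, 0 <= a -> 0 <= cost v B n r zi a).
  { intros a Ha. apply cost_nonneg; auto; [apply slots_facts|apply vbar_nonneg; auto; lra]. }
  destruct (best_response_guarantee v B n r i zi (x0 i) Hbr (v_val i Hi) Hc) as [Hpaid Hdev].
  pose proof Hbr as [Hx _]. pose proof (Hc (x0 i) ltac:(lra)).
  exists zi. rewrite Rplus_0_l in Hzi. rewrite Hpay. repeat split; auto; lra.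
Qed.

Let V : R := vbar v B r1 (1/2).
Let V2 : R := vbar v B r2 (1/2).
Let price : nat -> R := price_level v B r1.
Let Z : R := sumR x (others r1).
Let Rev : R := step_cum D k price Z.
Let Aothers : R := sumR (fun i => vbar v B i (x i)) (others r1).
Let y : nat -> R := ep_alloc v B r1 r2 x x' pi'.
Let A : R := liquid_welfare v B n y.

Lemma estimates_facts : 0 <= V <= v r1 (1/2) /\ V <= B r1 /\ 0 <= V2 <= B r2.
Proof.
  pose proof (vbar_nonneg r1 (1/2) r1_lt ltac:(lra)). pose proof (vbar_nonneg r2 (1/2) r2_lt ltac:(lra)).
  unfold V, V2, vbar in *. pose proof (Rmin_l (v r1 (1/2)) (B r1)).
  pose proof (Rmin_r (v r1 (1/2)) (B r1)). pose proof (Rmin_r (v r2 (1/2)) (B r2)). lra.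
Qed.

Lemma price_nonneg j : 0 <= price j.
Proof. apply price_level_nonneg, estimates_facts. Qed.

Lemma cost_step z a : cost v B n r1 z a = step_cum D k price (z + a) - step_cum D k price z.
Proof. reflexivity. Qed.

Lemma revenue_level j : (1 <= j <= k)%nat -> INR j * D - D / 2 <= Z -> price j * (D / 2) <= Rev.
Proof. apply step_cum_level; [apply slots_facts|apply price_nonneg]. Qed.

(* The revenue is paid by the buyers, so it is at most their truncated welfare. *)
Lemma revenue_le_buyers : 0 <= Rev <= Aothers.
Proof.
  split; [apply step_cum_nonneg, price_nonneg|].
  assert (Hrev : sumR pi (others r1) = Rev).
  { pose proof run1 as Hrun. unfold sell_without in Hrun. unfold Rev, Z, others.
    rewrite (run_revenue v B n r1 x pi _ 0 Hrun), !cum_price_step, Rplus_0_l, step_cum_0;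
      [apply Rminus_0_r|apply slots_facts]. }
  rewrite <- Hrev. apply sumR_le. intros i Hi. apply in_others in Hi as [Hi Hir].
  destruct (buyer_facts r1 x pi run1 r1_lt i Hi Hir) as [zi [_ [_ [Hpay _]]]]. lra.
Qed.

Lemma buyer_le_buyers i : In i (others r1) -> vbar v B i (x i) <= Aothers.
Proof.
  apply (sumR_term (fun i => vbar v B i (x i))). intros j Hj. apply in_others in Hj as [Hj Hjr].
  destruct (buyer_facts r1 x pi run1 r1_lt j Hj Hjr) as [zj [_ [Hx _]]]. apply vbar_nonneg; auto; lra.
Qed.

Lemma welfare_parts : 0 <= vbar v B r1 (y r1) <= A /\ 0 <= Aothers <= A.
Proof.
  assert (HA : A = vbar v B r1 (y r1) + Aothers).
  { unfold A. change (liquid_welfare v B n y) with (sumR (fun i => vbar v B i (y i)) (seq 0 n)).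
    rewrite (sum_players _ r1 r1_lt). f_equal. apply sumR_ext. intros i Hi.
    apply in_others in Hi as [_ Hir]. unfold y, ep_alloc. apply Nat.eqb_neq in Hir. rewrite Hir. reflexivity. }
  assert (0 <= vbar v B r1 (y r1)).
  { destruct (buyer_facts r2 x' pi' run2 r2_lt r1 r1_lt (not_eq_sym r2_ne)) as [z [_ [Hx _]]].
    apply vbar_nonneg; auto. unfold y, ep_alloc. rewrite Nat.eqb_refl. destruct Rle_dec; lra. }
  pose proof revenue_le_buyers. lra.
Qed.

(* If the runner-up's estimate is small, [r1] keeps at least half his estimate:
   either he takes [1/2] outright or his second-run purchase is worth as much. *)
Lemma r1_secures_half : 4 * V2 <= V -> V / 2 <= A.
Proof.
  intros Hsmall. pose proof estimates_facts as HV. pose proof welfare_parts as HA.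
  apply Rle_trans with (vbar v B r1 (y r1)); [|lra].
  destruct (buyer_facts r2 x' pi' run2 r2_lt r1 r1_lt (not_eq_sym r2_ne)) as [z [_ [_ [Hpay _]]]].
  unfold y, ep_alloc. rewrite Nat.eqb_refl. fold V2.
  destruct Rle_dec as [Hkeep|_]; [|fold V; lra].
  unfold vbar at 1. apply Rmin_glb; lra.
Qed.

Lemma half_slot_value i : (i < n)%nat -> D * vbar v B i (1/2) <= vbar v B i (D / 2).
Proof.
  intros Hi. destruct slots_facts as [Hk [HD [HD0 HDle]]].
  pose proof (valuation_chunks _ (valuation_vbar v B i (v_val i Hi) (Rlt_le _ _ (B_pos i Hi)))
    (2 * k - 1) (D / 2) ltac:(lra)) as Hch.
  replace (INR (S (2 * k - 1))) with (2 * INR k) in Hch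
    by (replace (S (2 * k - 1)) with (2 * k)%nat by lia; rewrite mult_INR; reflexivity).
  replace (2 * INR k * (D / 2)) with (1/2) in Hch by nra.
  pose proof (vbar_nonneg i (D / 2) Hi ltac:(lra)).
  specialize (Hch ltac:(lra)). nra.
Qed.

(* If the runner-up's estimate is large, then in Sell-Without-[r1] either the
   first slot was half sold before [r2] arrived, or [r2] could buy half a slot at
   the first price; in both cases welfare [V D / 8] is generated. *)
Lemma r2_secures_slot : V < 4 * V2 -> V * D / 8 <= A.
Proof.
  intros Hlarge. destruct slots_facts as [Hk [HD [HD0 HDle]]].
  pose proof estimates_facts as HV. pose proof welfare_parts as HA. pose proof revenue_le_buyers.
  destruct (buyer_facts r1 x pi run1 r1_lt r2 r2_lt r2_ne) as [z [[Hz0 HzZ] [Hx [_ Hdev]]]].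
  fold Z in HzZ. assert (Hp1 : price 1 = V / 4) by apply price_level_1.
  destruct (Rle_dec (D / 2) z) as [Hlate|Hearly].
  - pose proof (revenue_level 1 ltac:(lia) ltac:(simpl; lra)). nra.
  - assert (Hcost : cost v B n r1 z (D / 2) <= V / 4 * (D / 2)).
    { rewrite cost_step. apply step_cum_increment; auto; try lra.
      intros j Hj Hlt. destruct j as [|[|j]]; [lia|lra|].
      exfalso. replace (S (S j) - 1)%nat with (S j) in Hlt by lia.
      pose proof (le_INR 1 (S j) ltac:(lia)). simpl in *. nra. }
    pose proof (Hdev (D / 2) ltac:(lra)). pose proof (half_slot_value r2 r2_lt) as Hhalf.
    pose proof (buyer_le_buyers r2 (proj2 (in_others r1 r2) (conj r2_lt r2_ne))).
    fold V2 in Hhalf. nra.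
Qed.

Lemma estimate_bound : V <= 16 * INR k * A.
Proof.
  destruct slots_facts as [Hk [HD [HD0 _]]]. pose proof welfare_parts.
  assert (1 <= INR k) by (apply (le_INR 1) in Hk; simpl in Hk; lra).
  destruct (Rle_dec (4 * V2) V) as [Hsmall|Hlarge].
  - pose proof (r1_secures_half Hsmall). nra.
  - pose proof (r2_secures_slot (Rnot_le_lt _ _ Hlarge)). nra.
Qed.

(* Every level whose slot starts before [Z + D/2] has price at most
   [8 k Rev + V/4]: the previous level is half sold, so its price is paid in Rev. *)
Lemma price_below_sold j : (1 <= j <= k)%nat -> INR (j - 1) * D < Z + D / 2 ->
  price j <= 8 * INR k * Rev + V / 4.
Proof.
  intros Hj Hlt. destruct slots_facts as [_ [HD [HD0 _]]]. pose proof revenue_le_buyers.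
  pose proof (pos_INR k).
  destruct j as [|[|j]]; [lia|unfold price; rewrite price_level_1; fold V; nra|].
  replace (S (S j) - 1)%nat with (S j) in Hlt by lia.
  pose proof (revenue_level (S j) ltac:(lia) ltac:(lra)).
  pose proof (price_nonneg (S j)). pose proof estimates_facts.
  unfold price in *. rewrite price_level_S.
  assert (price_level v B r1 (S j) = 2 * INR k * D * price_level v B r1 (S j)) by (rewrite HD; ring).
  nra.
Qed.

Let P : R := 8 * INR k * Rev + V / 4.

Lemma small_purchase_cost zi s : 0 <= zi <= Z -> 0 <= s <= D / 2 -> cost v B n r1 zi s <= P * s.
Proof.
  intros Hzi Hs. pose proof revenue_le_buyers. pose proof estimates_facts. pose proof (pos_INR k).
  rewrite cost_step. apply step_cum_increment; [apply slots_facts|lra|lra|unfold P; nra|].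
  intros j Hj Hlt. apply price_below_sold; auto; lra.
Qed.

Lemma buyer_envelope i : In i (others r1) -> Z <= 1/2 - D / 2 ->
  forall a, 0 <= a <= 1 -> vbar v B i a <= 8 * INR k * vbar v B i (x i) + P * a.
Proof.
  intros Hin HZ a Ha. apply in_others in Hin as [Hi Hir].
  destruct slots_facts as [Hk [HD [HD0 HDle]]]. apply (le_INR 1) in Hk. simpl in Hk.
  destruct (buyer_facts r1 x pi run1 r1_lt i Hi Hir) as [zi [Hzi [Hx [_ Hdev]]]]. fold Z in Hzi.
  replace (8 * INR k) with (2 / (D / 2)) by (unfold D; field; lra).
  apply valuation_envelope; auto; try lra.
  - apply valuation_vbar; [apply v_val|apply Rlt_le, B_pos]; auto.
  - apply vbar_nonneg; auto; lra.
  - intros b Hb. pose proof (Hdev b ltac:(lra)). pose proof (small_purchase_cost zi b Hzi Hb). lra.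
Qed.

Lemma feasible_bundle w i : feasible n w -> (i < n)%nat -> 0 <= w i <= 1 /\ vbar v B i (w i) <= 2 * V.
Proof.
  intros [Hw0 Hw1] Hi. change (fold_right Rplus 0 (map w (seq 0 n))) with (sumR w (seq 0 n)) in Hw1.
  assert (Hwi : 0 <= w i <= 1).
  { split; auto. rewrite <- Hw1. apply sumR_term; [|apply in_seq; lia].
    intros j Hj. apply in_seq in Hj. apply Hw0. lia. }
  split; auto. pose proof (r1_max i Hi) as Hmax. fold V in Hmax.
  pose proof (valuation_le_twice_half _ (w i) (valuation_vbar v B i (v_val i Hi) (Rlt_le _ _ (B_pos i Hi))) Hwi).
  lra.
Qed.

(* Case 1: half a slot is still unsold.  Each buyer's share is bounded by his
   envelope, [r1]'s share by [2V], and [P <= 8 k A + V / 4]. *)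
Lemma welfare_bound_unsold w : Z <= 1/2 - D / 2 -> feasible n w ->
  liquid_welfare v B n w <= 64 * INR k * A.
Proof.
  intros HZ Hw. destruct slots_facts as [Hk _]. apply (le_INR 1) in Hk. simpl in Hk.
  pose proof estimate_bound. pose proof welfare_parts. pose proof revenue_le_buyers. pose proof estimates_facts.
  destruct (feasible_bundle w r1 Hw r1_lt) as [Hwr1 Hvr1].
  assert (Hsum : w r1 + sumR w (others r1) = 1).
  { rewrite <- (sum_players w r1 r1_lt). apply Hw. }
  assert (Hbuyers : sumR (fun i => vbar v B i (w i)) (others r1) <=
                    8 * INR k * Aothers + P * sumR w (others r1)).
  { unfold Aothers. rewrite <- !sumR_scal, <- sumR_plus. apply sumR_le. intros i Hi.
    pose proof Hi as Hin. apply in_others in Hin as [Hin _].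
    apply buyer_envelope; auto. apply (feasible_bundle w i Hw Hin). }
  assert (HP : 0 <= P <= 8 * INR k * A + V / 4) by (unfold P; split; nra).
  change (liquid_welfare v B n w) with (sumR (fun i => vbar v B i (w i)) (seq 0 n)).
  rewrite (sum_players _ r1 r1_lt).
  assert (P * sumR w (others r1) <= P) by nra.
  nra.
Qed.

(* Case 2: almost everything is sold.  Then the top level was reached, whose
   price [2^k V / 8 >= n V / 8] is paid in the revenue, while no allocation is
   worth more than [2 n V]. *)
Lemma welfare_bound_sold_out w : 1/2 - D / 2 < Z -> feasible n w ->
  liquid_welfare v B n w <= 64 * INR k * A.
Proof.
  intros HZ Hw. destruct slots_facts as [Hk [HD [HD0 _]]].
  pose proof welfare_parts. pose proof revenue_le_buyers. pose proof estimates_facts.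
  pose proof (revenue_level k ltac:(lia) ltac:(lra)) as Htop.
  unfold price, price_level in Htop. fold V in Htop.
  pose proof (n_le_pow_kk n n_ge_2) as Hn. fold k in Hn.
  assert (Hpow : 0 < 2 ^ k) by (apply pow_lt; lra).
  assert (Hall : liquid_welfare v B n w <= INR n * (2 * V)).
  { change (liquid_welfare v B n w) with (sumR (fun i => vbar v B i (w i)) (seq 0 n)).
    rewrite <- (length_seq n 0) at 2. rewrite <- sumR_const. apply sumR_le.
    intros i Hi. apply in_seq in Hi. apply (feasible_bundle w i Hw). lia. }
  assert (2 ^ k * V = 2 ^ k * V * (2 * INR k * D)) by (rewrite HD; ring).
  assert (2 ^ k * V <= 32 * INR k * A) by nra.
  nra.
Qed.

Lemma optimum_bound w : welfare_values v B n w -> w <= 576 * log2 (INR n) ^ 2 * A.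
Proof.
  intros [u [Hu ->]]. pose proof welfare_parts.
  pose proof (log2_ge_1 n n_ge_2). pose proof (kk_bounds n n_ge_2).
  assert (Hk : INR k <= 9 * log2 (INR n) ^ 2) by (unfold k; nra).
  apply Rle_trans with (64 * INR k * A); [|nra].
  destruct (Rle_dec Z (1/2 - D / 2)) as [Hunsold|Hsold].
  - apply welfare_bound_unsold; auto.
  - apply welfare_bound_sold_out; auto. lra.
Qed.

Lemma approximation Wopt : is_lub (welfare_values v B n) Wopt ->
  A >= Wopt / (576 * log2 (INR n) ^ 2).
Proof.
  intros [_ Hleast]. pose proof (log2_ge_1 n n_ge_2).
  assert (Hc : 0 < 576 * log2 (INR n) ^ 2) by nra.
  assert (Hw : Wopt <= 576 * log2 (INR n) ^ 2 * A) by (apply Hleast; intros w; apply optimum_bound).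
  apply Rle_ge, Rmult_le_reg_r with (576 * log2 (INR n) ^ 2); auto.
  unfold Rdiv. rewrite Rmult_assoc, Rinv_l by lra. lra.
Qed.

End EstimateAndPrice.

Theorem mainTheorem18 :
  exists C : R, 0 < C /\
  forall (n : nat) (v : nat -> R -> R) (B : nat -> R),
    (2 <= n)%nat ->
    (forall i, (i < n)%nat -> valuation (v i)) ->
    (forall i, (i < n)%nat -> 0 < B i) ->
    forall (ord : list nat) (r1 r2 : nat) (x pi x' pi' : nat -> R),
      Permutation ord (seq 0 n) ->
      (r1 < n)%nat ->
      (forall i, (i < n)%nat -> vbar v B i (1/2) <= vbar v B r1 (1/2)) ->
      (r2 < n)%nat -> r2 <> r1 ->
      (forall i, (i < n)%nat -> i <> r1 -> vbar v B i (1/2) <= vbar v B r2 (1/2)) ->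
      sell_without v B n ord r1 x pi ->
      sell_without v B n ord r2 x' pi' ->
      forall Wopt : R,
        is_lub (welfare_values v B n) Wopt ->
        liquid_welfare v B n (ep_alloc v B r1 r2 x x' pi') >=
          Wopt / (C * (log2 (INR n)) ^ 2).
Proof.
  exists 576. split; [lra|].
  intros n v B Hn Hval HB ord r1 r2 x pi x' pi' Hperm Hr1 Hmax1 Hr2 Hne _ Hrun1 Hrun2 Wopt Hlub.
  exact (approximation n v B Hn Hval HB ord r1 r2 x pi x' pi' Hperm Hr1 Hmax1 Hr2 Hne Hrun1 Hrun2 Wopt Hlub).
Qed.
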